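(* A nontrivial commutative ring $A$ is an integral domain if and only if $A$ is the only nonzero ideal of $A$ that is also a factroid of $A$.
   Context: A factroid of $A$ is an additive subgroup $F$ of $A$ such that for all $a\in A$ and every nonzerodivisor $b$ of $A$, $ba\in F$ implies $a\in F$. *)

From HB Require Import structures.
From mathcomp Require Import all_boot all_algebra.
Set Implicit Arguments. Unset Strict Implicit. Unset Printing Implicit Defensive.
Import GRing.Theory.
Local Open Scope ring_scope.

Definition is_add_subgroup (A : comNzRingType) (F : A -> Prop) : Prop :=
  F 0 /\ (forall x y, F x -> F y -> F (x - y)).

Definition is_ideal (A : comNzRingType) (I : A -> Prop) : Prop :=
  is_add_subgroup I /\ (forall r x, I x -> I (r * x)).

Definition nonzerodivisor (A : comNzRingType) (b : A) : Prop :=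
  forall a : A, b * a = 0 -> a = 0.

Definition is_factroid (A : comNzRingType) (F : A -> Prop) : Prop :=
  is_add_subgroup F /\
  (forall a b : A, nonzerodivisor b -> F (b * a) -> F a).

Definition nonzero_set (A : comNzRingType) (I : A -> Prop) : Prop :=
  exists x, I x /\ x <> 0.

(* A is an integral domain (nontriviality is built into comNzRingType) *)
Definition is_integral_domain (A : comNzRingType) : Prop :=
  forall a b : A, a * b = 0 -> a = 0 \/ b = 0.

From mathcomp Require Import all_boot all_algebra.
Set Implicit Arguments. Unset Strict Implicit. Unset Printing Implicit Defensive.
Import GRing.Theory.
Local Open Scope ring_scope.

(* An ideal that is a factroid and contains a nonzerodivisor x contains every
   a, since it contains x * a.  In a domain every nonzero element is a
   nonzerodivisor, which gives one direction.  Conversely, the annihilator of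
   any b is always a factroid ideal; if a * b = 0 with a <> 0 it is nonzero,
   hence the whole ring, so b = 1 * b = 0. *)

Section Factroids.

Variable A : comNzRingType.

Section FullSet.

Variables (I : A -> Prop) (I_full : forall x, I x).

Lemma full_is_ideal : is_ideal I.
Proof. by split; [split|]. Qed.

Lemma full_is_factroid : is_factroid I.
Proof. by split; [split|]. Qed.

Lemma full_nonzero : nonzero_set I.
Proof. by exists 1; split=> //; apply/eqP; apply: oner_neq0. Qed.

End FullSet.

Lemma domain_nonzerodivisor (x : A) :
  is_integral_domain A -> x <> 0 -> nonzerodivisor x.
Proof. by move=> dom x0 a /dom [/x0|]. Qed.

Lemma factroid_ideal_full (I : A -> Prop) (x : A) :
  is_ideal I -> is_factroid I -> I x -> nonzerodivisor x -> forall a, I a.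
Proof.
move=> [_ I_mul] [_ I_div] Ix x_nzd a.
by apply: (I_div a x x_nzd); rewrite mulrC; apply: I_mul.
Qed.

Definition annihilator (b : A) : A -> Prop := fun x => x * b = 0.

Lemma annihilator_add_subgroup (b : A) : is_add_subgroup (annihilator b).
Proof.
split; first by rewrite /annihilator mul0r.
by move=> x y xb0 yb0; rewrite /annihilator mulrBl xb0 yb0 subrr.
Qed.

Lemma annihilator_is_ideal (b : A) : is_ideal (annihilator b).
Proof.
split; first exact: annihilator_add_subgroup.
by move=> r x xb0; rewrite /annihilator -mulrA xb0 mulr0.
Qed.

Lemma annihilator_is_factroid (b : A) : is_factroid (annihilator b).
Proof.
split; first exact: annihilator_add_subgroup.
by move=> x c c_nzd cxb0; apply: c_nzd; rewrite mulrA.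
Qed.

End Factroids.

Theorem proposition4p9 (A : comNzRingType) :
  is_integral_domain A <->
  (forall I : A -> Prop,
     (is_ideal I /\ nonzero_set I /\ is_factroid I) <-> (forall x, I x)).
Proof.
split=> [dom I | full_only a b ab0].
- split=> [[I_ideal [[x [Ix x0]] I_factroid]] | I_full].
    exact: factroid_ideal_full I_ideal I_factroid Ix (domain_nonzerodivisor dom x0).
  by split; [|split];
    [apply: full_is_ideal | apply: full_nonzero | apply: full_is_factroid].
- have [-> | a0] := eqVneq a 0; [by left | right].
  have ann_full : forall x, annihilator b x.
    apply/full_only; split; first exact: annihilator_is_ideal.
    split; last exact: annihilator_is_factroid.
    by exists a; split; last exact/eqP.
  by have := ann_full 1; rewrite /annihilator mul1r.
Qed.
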